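(* Let $(P_t)_{t\in\mathbb{R}_+}$ be a stochastically monotone Feller semigroup on $\mathbb{R}$. For $x\in\mathbb{R}$, $t\ge0$, $u\in[0,1]$ let $F^{[-1]}_{x,t}(u)=\inf\{y\in\mathbb{R}:P_t(x,(-\infty,y])\ge u\}\in\overline{\mathbb{R}}$, and let $F^{[-1]}_{-\infty,t}\equiv-\infty$, $F^{[-1]}_{+\infty,t}\equiv+\infty$. Then: (a) for all $x\in\overline{\mathbb{R}}$ and $t\ge0$, $u\mapsto F^{[-1]}_{x,t}(u)$ is non-decreasing; (b) for all $x\in\mathbb{R}$, $t\ge0$, $u\in(0,1)$, $F^{[-1]}_{x,t}(u)\in\mathbb{R}$; (c) for all $t\ge0$ and $u\in(0,1)$, $x\mapsto F^{[-1]}_{x,t}(u)$ is non-decreasing on $\overline{\mathbb{R}}$; (d) if $U$ is uniform on $[0,1]$, then for all $x\in\overline{\mathbb{R}}$, $t\ge0$, the law of $F^{[-1]}_{x,t}(U)$ is $\tilde{P}_t(x,\cdot)$; (e) for all $t\ge0$ and $x\in\overline{\mathbb{R}}$, for all $u\in[0,1]$ outside an at most countable set, the map $y\mapsto F^{[-1]}_{y,t}(u)$ from $\overline{\mathbb{R}}$ to $\overline{\mathbb{R}}$ is continuous at $x$.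
   Context: $\overline{\mathbb{R}}=[-\infty,+\infty]$ with the topology given by the metric $|\tanh y-\tanh x|$. $\tilde{P}_t$ is the kernel on $\overline{\mathbb{R}}$ with $\tilde{P}_t(x,B)=P_t(x,B\cap\mathbb{R})$ for $x\in\mathbb{R}$ and $\tilde{P}_t(\pm\infty,\cdot)=\delta_{\pm\infty}$. Feller semigroup on $\mathbb{R}$: Markov semigroup with $P_tf\in\mathcal{C}_0(\mathbb{R})$ for $f\in\mathcal{C}_0(\mathbb{R})$ and $\sup_x|P_tf-f|\to0$ as $t\to0^+$; stochastically monotone: $P_tf$ non-decreasing for bounded non-decreasing Borel $f$. *)

From HB Require Import structures.
From mathcomp Require Import all_boot all_order all_algebra.
From mathcomp Require Import all_classical all_reals all_analysis measurable_realfun.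
Set Implicit Arguments. Unset Strict Implicit. Unset Printing Implicit Defensive.
Import Order.TTheory GRing.Theory Num.Theory.
Import numFieldNormedType.Exports.
Local Open Scope classical_set_scope.
Local Open Scope ring_scope.

Section Defs.
Variable R : realType.

Definition kfamily := R -> R.-pker R ~> R.

Definition Pop (P : kfamily) (t : R) (f : R -> R) : R -> R :=
  fun x => (\int[P t x]_(y in setT) f y)%R.

Definition C0 (f : R -> R) : Prop :=
  continuous f /\ f @ pinfty_nbhs R --> (0 : R) /\ f @ ninfty_nbhs R --> (0 : R).

Definition markov_semigroup (P : kfamily) : Prop :=
  (forall (x : R) (B : set R), measurable B -> P 0 x B = \d_x B) /\
  (forall s t : R, 0 <= s -> 0 <= t -> forall (x : R) (B : set R), measurable B ->
     P (s + t) x B = (\int[P s x]_(y in setT) P t y B)%E).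

Definition feller_semigroup (P : kfamily) : Prop :=
  markov_semigroup P /\
  (forall t : R, 0 <= t -> forall f, C0 f -> C0 (Pop P t f)) /\
  (forall f, C0 f -> forall e : R, 0 < e -> exists2 d : R, 0 < d &
     forall t : R, 0 < t < d -> forall x : R, `|Pop P t f x - f x| <= e).

Definition stoch_monotone (P : kfamily) : Prop :=
  forall t : R, 0 <= t -> forall f : R -> R,
    measurable_fun setT f -> (exists M : R, forall x, `|f x| <= M) ->
    {homo f : x y / x <= y} -> {homo Pop P t f : x y / x <= y}.

Definition Finv (P : kfamily) (t : R) (x : \bar R) (u : R) : \bar R :=
  match x with
  | EFin x => ereal_inf [set y%:E | y in [set y : R | (u%:E <= P t x [set` `]-oo, y]])%E]]
  | +oo%E => +oo%E
  | -oo%E => -oo%E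
  end.

Definition Ptilde (P : kfamily) (t : R) (x : \bar R) (B : set (\bar R)) : \bar R :=
  match x with
  | EFin x => P t x (EFin @^-1` B)
  | +oo%E => \d_(+oo%E : \bar R) B
  | -oo%E => \d_(-oo%E : \bar R) B
  end.

End Defs.

From HB Require Import structures.
From mathcomp Require Import all_boot all_order all_algebra.
From mathcomp Require Import all_classical all_reals all_analysis measurable_realfun.
From mathcomp Require Import lra.
Import Order.TTheory GRing.Theory Num.Theory.
Import numFieldNormedType.Exports.
Local Open Scope classical_set_scope.
Local Open Scope ring_scope.

(* For real x, F^{[-1]}_{x,t} is the quantile function of P_t(x,.): it is
   nondecreasing, and on (0,1) it is finite and characterised by
   [q <= y <-> u <= F_x(y)], so that the image of the uniform law charges
   every ray ]-oo, r] as P_t(x,.) does.  Stochastic monotonicity makes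
   x |-> F_x(y) nonincreasing, hence the quantiles increase with x.
   For continuity, apply the Feller property to trapezoidal bumps squeezed
   between the indicators of ]a, b] and ]a - d, b + d]: when x moves a
   little, the mass of an interval leaks out by at most an arbitrarily small
   margin, and when x tends to +oo or -oo all mass escapes in that direction.
   This pins the quantile at points near x from both sides unless u is the
   level of a flat piece of F_x, and such levels are values of F_x at
   rationals. *)

Lemma countableU T (A B : set T) : countable A -> countable B -> countable (A `|` B).
Proof.
by move=> cA cB; rewrite -bigcup2E; apply: bigcup_countable => // -[|[|i]].
Qed.

Lemma nondecreasing_emeasurable {R : realType} (D : set R) (f : R -> \bar R) :
  measurable D -> {homo f : x y / x <= y >-> (x <= y)%E} -> measurable_fun D f.
Proof.
move=> mD f_nd.
apply: (measurability (@ErealGenCInfty.G R)) => [|/= _ [_] [r] -> <-].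
  exact: ErealGenCInfty.measurableE.
apply: measurableI => //; apply: is_interval_measurable => s t/=.
rewrite !in_itv/= !andbT => fs ft u /andP[su ut].
by rewrite in_itv/= andbT (le_trans fs)// f_nd.
Qed.

Lemma itvoc_setD_rays {R : realType} (a b : R) : a <= b ->
  (`]a, b] = `]-oo, b] `\` `]-oo, a])%classic.
Proof.
move=> ab; apply/seteqP; split => x /=; rewrite !in_itv/= ?andbT.
  by move=> /andP[ax xb]; split=> //; apply/negP; rewrite -ltNge.
by move=> [xb] /negP; rewrite -ltNge => ->.
Qed.

Lemma measure_unique_rays {R : realType} (m1 m2 : {measure set R -> \bar R}) :
  (m1 setT < +oo)%E -> (m2 setT < +oo)%E ->
  (forall r, m1 `]-oo, r]%classic = m2 `]-oo, r]%classic) ->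
  forall A, measurable A -> m1 A = m2 A.
Proof.
move=> m1oo m2oo m12 A mA.
have m1fin B : measurable B -> (m1 B < +oo)%E.
  by move=> mB; apply: le_lt_trans m1oo; apply: le_measure; rewrite ?inE.
have m2fin B : measurable B -> (m2 B < +oo)%E.
  by move=> mB; apply: le_lt_trans m2oo; apply: le_measure; rewrite ?inE.
apply: (measure_unique (@ocitv R) (fun n => `]-(n%:R), n%:R]%classic)
  _ _ _ _ m1 m2) => //.
- exact: ocitvI.
- by move=> n; exact: is_ocitv.
- apply/seteqP; split => // x _.
  exists (Num.truncn `|x|).+1 => //=; rewrite in_itv/=.
  by have := truncnS_gt `|x|; rewrite ltr_norml => /andP[-> /ltW ->].
- move=> _ [[a b] _ <-] /=.
  have [ba|ab] := leP b a; first by rewrite set_itv_ge ?measure0// bnd_simp -leNgt.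
  have rayI : (`]-oo, b] `&` `]-oo, a] = `]-oo, a])%classic.
    by apply/setIidr/subset_itvl; rewrite bnd_simp ltW.
  rewrite itvoc_setD_rays ?ltW// !measureD ?m1fin ?m2fin// rayI.
  by congr (_ - _)%E; apply: m12.
- by move=> n; exact: m1fin.
Qed.

Lemma lebesgue_measure_setI_itvcc {R : realType} (a b : R) (X : set R) :
  a <= b -> measurable X ->
  lebesgue_measure (`[a, b]%classic `&` X) = lebesgue_measure (`]a, b[%classic `&` X).
Proof.
move=> ab mX; rewrite -(setUitv_set2 false true ab) setIUl measureU0//.
- exact: measurableI.
- by apply: measurableI => //; apply: measurableU.
- apply: countable_lebesgue_measure0; apply: (@sub_countable _ _ _ [set a; b]).
    by apply/subset_card_le => x [].
  by apply: countableU; exact: countable1.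
Qed.

Lemma lebesgue_measure_itv01_setI_ray {R : realType} (c : R) : 0 <= c <= 1 ->
  lebesgue_measure (`]0, 1[%classic `&` `]-oo, c]%classic) = c%:E.
Proof.
move=> /andP[c0 c1].
have itv0c b : lebesgue_measure [set` Interval (BRight 0) (BSide b c)] = c%:E.
  rewrite lebesgue_measure_itv/= lte_fin.
  have [_|c_le0] := ltP 0 c.
    by rewrite oppr0 adde0.
  by have -> : c = 0 by apply/le_anti; rewrite c_le0 c0.
apply/le_anti/andP; split.
  rewrite -(itv0c false); apply: le_measure; rewrite ?inE//; first exact: measurableI.
  by move=> u []; rewrite /= !in_itv/= => /andP[-> _].
rewrite -(itv0c true); apply: le_measure; rewrite ?inE//; first exact: measurableI.
move=> u; rewrite /= !in_itv/= => /andP[u0 uc].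
by rewrite u0 (lt_le_trans uc c1) ltW.
Qed.

Lemma lebesgue_measure_itv01_setI_preimage_cst {R : realType} d (T : measurableType d)
    (c : T) (B : set T) :
  lebesgue_measure (`[0, 1]%classic `&` (fun _ : R => c) @^-1` B) = \d_c B.
Proof.
rewrite diracE; have [Bc|Bc] := pselect (B c).
  rewrite mem_set// preimage_cst ifT ?inE// setIT.
  by rewrite lebesgue_measure_itv/= lte01 oppr0 adde0.
rewrite memNset// preimage_cst ifF ?setI0 ?measure0//.
by apply/negbTE/negP; rewrite inE.
Qed.

Section probability_cdf.
Context {R : realType} (mu : probability R R).

Definition cdfR (r : R) : R := fine (mu `]-oo, r]%classic).

Let idR : R -> R := idfun.
#[local] HB.instance Definition _ :=
  @isMeasurableFun.Build _ _ _ _ idR (@measurable_id _ _ setT).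

Let cdf_idR r : cdf (idR : {RV mu >-> R}) r = mu `]-oo, r]%classic.
Proof. by []. Qed.

Lemma cdfRE r : (cdfR r)%:E = mu `]-oo, r]%classic.
Proof. by rewrite fineK// fin_num_measure. Qed.

Lemma cdfR_ge0 r : 0 <= cdfR r.
Proof. by rewrite -lee_fin cdfRE measure_ge0. Qed.

Lemma cdfR_le1 r : cdfR r <= 1.
Proof. by rewrite -lee_fin cdfRE probability_le1. Qed.

Lemma cdfR_nondecreasing : {homo cdfR : r s / r <= s}.
Proof. by move=> r s rs; rewrite -lee_fin !cdfRE -!cdf_idR cdf_nondecreasing. Qed.

Lemma cdfR_right_continuous : right_continuous cdfR.
Proof.
by move=> r; apply: fine_cvg; rewrite cdfRE -cdf_idR; exact: cdf_right_continuous.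
Qed.

Lemma cvg_cdfRy1 : cdfR @ +oo --> (1 : R).
Proof. exact/fine_cvg/(cvg_cdfy1 (idR : {RV mu >-> R})). Qed.

Lemma cvg_cdfRNy0 : cdfR @ -oo --> (0 : R).
Proof. exact/fine_cvg/(cvg_cdfNy0 (idR : {RV mu >-> R})). Qed.

Lemma prob_itvoy r : mu `]r, +oo[%classic = (1 - cdfR r)%:E.
Proof.
by rewrite EFinB cdfRE -setCitvl probability_setC.
Qed.

Lemma prob_itvoc a b : a <= b -> mu `]a, b]%classic = (cdfR b - cdfR a)%:E.
Proof.
move=> ab; rewrite itvoc_setD_rays// measureD ?ltey_eq ?fin_num_measure//.
rewrite EFinB !cdfRE; congr (_ - mu _)%E.
by apply/setIidr/subset_itvl; rewrite bnd_simp.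
Qed.

Lemma exists_cdfR_gt z {c} : c < 1 -> exists2 K, z <= K & c < cdfR K.
Proof.
move=> c1; have [M [_ FM]] := cvgr_gt _ cvg_cdfRy1 _ c1.
exists (Num.max z (M + 1)); first by rewrite le_max lexx.
by apply: FM; rewrite lt_max ltrDl ltr01 orbT.
Qed.

Lemma exists_cdfR_lt z {c} : 0 < c -> exists2 K, K <= z & cdfR K < c.
Proof.
move=> c0; have [m [_ Fm]] := cvgr_lt _ cvg_cdfRNy0 _ c0.
exists (Num.min z (m - 1)); first by rewrite ge_min lexx.
by apply: Fm; rewrite gt_min gtrBl ltr01 orbT.
Qed.

Lemma exists_cdfR_right_lt y {c} : cdfR y < c -> exists2 e, 0 < e & cdfR (y + e) < c.
Proof.
move=> Fyc; have [e /= e_gt0 Fe] := cvgr_lt _ (cdfR_right_continuous y) _ Fyc.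
exists (e / 2); first by rewrite divr_gt0.
apply: Fe; last by rewrite ltrDl divr_gt0.
rewrite /ball_/= opprD addrA subrr sub0r normrN gtr0_norm ?divr_gt0//.
by rewrite ltr_pdivrMr// ltr_pMr// ltr1n.
Qed.

Definition quantile (u : R) : \bar R :=
  ereal_inf [set y%:E | y in [set y : R | (u%:E <= mu `]-oo, y]%classic)%E]].

Lemma quantile_nondecreasing : {homo quantile : u v / u <= v >-> (u <= v)%E}.
Proof.
move=> u v uv; apply: le_ereal_inf => _ [y /= vy <-]; exists y => //=.
by rewrite (le_trans _ vy)// lee_fin.
Qed.

Lemma quantile_measurable D : measurable D -> measurable_fun D quantile.
Proof.
by move=> mD; apply: nondecreasing_emeasurable => //; exact: quantile_nondecreasing.
Qed.

Lemma quantile_galois {u} : 0 < u < 1 ->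
  exists q : R, quantile u = q%:E /\ forall y, q <= y <-> u <= cdfR y.
Proof.
move=> /andP[u0 u1].
set S := [set y : R | (u%:E <= mu `]-oo, y]%classic)%E].
have SE y : S y <-> u <= cdfR y by rewrite /S/= -cdfRE lee_fin.
have S0 : S !=set0.
  by have [M _ /ltW uM] := exists_cdfR_gt 0 u1; exists M; exact/SE.
have Slb : has_lbound S.
  have [m _ Fmu] := exists_cdfR_lt 0 u0; exists m => s /SE us.
  rewrite leNgt; apply/negP => /ltW/cdfR_nondecreasing/(le_trans us).
  by rewrite leNgt Fmu.
exists (inf S); split; first by rewrite /quantile ereal_inf_EFin.
move=> y; split; last by move=> /SE Sy; exact: ge_inf.
move=> Sy; rewrite leNgt; apply/negP => /exists_cdfR_right_lt[e e_gt0 Fye].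
have : y + e <= inf S.
  apply: lb_le_inf => // s /SE us; rewrite leNgt; apply/negP => ss.
  have := le_trans us (cdfR_nondecreasing _ _ (ltW ss)).
  by rewrite leNgt Fye.
by rewrite leNgt (le_lt_trans Sy)// ltrDl.
Qed.

Lemma cdfR_gt_right_quantile u q y : 0 < u < 1 -> quantile u = q%:E ->
  (forall r : rat, cdfR (ratr r) != u) -> q < y -> u < cdfR y.
Proof.
move=> u01 qE u_notin qy; have [q' [q'E q'P]] := quantile_galois u01.
move: q'E q'P; rewrite qE => -[<-] qP.
have [r /andP[qr ry]] : exists r : rat, q < ratr r < y.
  by have [r] := rat_in_itvoo qy; rewrite in_itv/=; exists r.
rewrite (lt_le_trans _ (cdfR_nondecreasing _ _ (ltW ry)))//.
by rewrite lt_neqAle eq_sym u_notin; apply/qP/ltW.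
Qed.

End probability_cdf.

Section quantile_law.
Context {R : realType} (mu : probability R R).
Local Notation U := (`]0, 1[%classic : set R).

Let mU : measurable U := measurable_itv _.

Let qR u := fine (quantile mu u).

Let mqR : measurable_fun setT qR.
Proof.
by apply: (measurableT_comp (fine_measurable measurableT)); exact: quantile_measurable.
Qed.

Let quantile_galoisR {u} : U u ->
  quantile mu u = (qR u)%:E /\ forall y, qR u <= y <-> u <= cdfR mu y.
Proof.
rewrite /= in_itv/= => /(quantile_galois mu)[q [qE qP]].
by rewrite /qR qE.
Qed.

Let law_rays r : pushforward (mrestr lebesgue_measure mU) qR `]-oo, r]%classic =
  mu `]-oo, r]%classic.
Proof.
rewrite /pushforward /mrestr -cdfRE setIC.
have -> : U `&` qR @^-1` `]-oo, r]%classic = U `&` `]-oo, cdfR mu r]%classic.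
  by apply/seteqP; split => u [Uu]; rewrite /= !in_itv/= => /(quantile_galoisR Uu).2.
by rewrite lebesgue_measure_itv01_setI_ray// cdfR_ge0 cdfR_le1.
Qed.

Lemma quantile_law B : measurable B ->
  lebesgue_measure (`[0, 1]%classic `&` quantile mu @^-1` B) = mu (EFin @^-1` B).
Proof.
move=> mB; have mEB : measurable (EFin @^-1` B).
  by rewrite -[X in measurable X]setTI; exact: EFin_measurable.
rewrite lebesgue_measure_setI_itvcc//; last first.
  by rewrite -[X in measurable X]setTI; exact: quantile_measurable.
have -> : U `&` quantile mu @^-1` B = qR @^-1` (EFin @^-1` B) `&` U.
  rewrite setIC; apply/seteqP; split => u [Bu Uu]; split => //=.
    by rewrite -(quantile_galoisR Uu).1.
  by rewrite (quantile_galoisR Uu).1.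
apply: (measure_unique_rays (pushforward (mrestr lebesgue_measure mU) qR)) => //.
  apply: (@le_lt_trans _ _ (lebesgue_measure U)).
    apply: le_measure; rewrite ?inE//; apply: measurableI => //.
    by rewrite -[X in measurable X]setTI; exact: mqR.
  by rewrite lebesgue_measure_itv/= lte01 oppr0 adde0 ltry.
by rewrite ltey_eq fin_num_measure.
Qed.

End quantile_law.

Section bump.
Context {R : realType} (a b d : R).
Hypotheses (ab : a <= b) (d_gt0 : 0 < d).

Definition bump (y : R) : R :=
  Num.max 0 (Num.min 1 (Num.min ((y - a + d) / d) ((b + d - y) / d))).

Lemma bump_ge0 y : 0 <= bump y.
Proof. by rewrite /bump le_max lexx. Qed.

Lemma bump_le1 y : bump y <= 1.
Proof. by rewrite /bump ge_max ler01 ge_min lexx. Qed.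

Lemma indic_le_bump y : \1_`]a, b]%classic y <= bump y.
Proof.
rewrite indicE; case: (boolP (y \in _)) => [|_]; last exact: bump_ge0.
rewrite inE/= in_itv/= => /andP[ay yb].
have ay_le : 1 <= (y - a + d) / d by rewrite ler_pdivlMr// mul1r lerDr subr_ge0 ltW.
have yb_le : 1 <= (b + d - y) / d by rewrite ler_pdivlMr// mul1r addrAC lerDr subr_ge0.
by rewrite /bump le_max le_min lexx le_min ay_le yb_le orbT.
Qed.

Lemma bump_out y : (y <= a - d) || (b + d < y) -> bump y = 0.
Proof.
move=> yab; apply/max_idPl; rewrite ge_min; apply/orP; right.
rewrite ge_min !pmulr_lle0 ?invr_gt0//.
by case/orP: yab => yab; apply/orP; [left|right]; lra.
Qed.

Lemma bump_le_indic y : bump y <= \1_`]a - d, b + d]%classic y.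
Proof.
rewrite indicE; case: (boolP (y \in _)) => [_|]; first exact: bump_le1.
rewrite notin_setE/= in_itv/= => /negP; rewrite negb_and -leNgt -ltNge.
by move=> /bump_out ->.
Qed.

Lemma continuous_bump : continuous bump.
Proof.
move=> y; have cst_cont (c : R) : {for y, continuous (cst c)}.
  by move=> ?; exact: cvg_cst.
have c1 : {for y, continuous (fun y : R => (y - a + d) / d)}.
  apply: cvgM; last exact: cvg_cst.
  by apply: cvgD; [apply: cvgB; [exact: cvg_id|exact: cvg_cst]|exact: cvg_cst].
have c2 : {for y, continuous (fun y : R => (b + d - y) / d)}.
  by apply: cvgM; [apply: cvgB; [exact: cvg_cst|exact: cvg_id]|exact: cvg_cst].
exact: continuous_max (cst_cont 0) (continuous_min (cst_cont 1) (continuous_min c1 c2)).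
Qed.

Lemma bump_C0 : C0 bump.
Proof.
split; first exact: continuous_bump.
split; apply: cvg_near_cst.
  exists (b + d); split; first exact: num_real.
  by move=> y yb; apply: bump_out; rewrite yb orbT.
exists (a - d); split; first exact: num_real.
by move=> y ya; apply: bump_out; rewrite ltW.
Qed.

Lemma bump_integral_bounds (mu : probability R R) :
  cdfR mu b - cdfR mu a <= \int[mu]_(y in setT) bump y
  <= cdfR mu (b + d) - cdfR mu (a - d).
Proof.
have ibump : mu.-integrable setT (EFin \o bump).
  apply: measurable_bounded_integrable => //.
  - by rewrite ltey_eq fin_num_measure.
  - exact: continuous_measurable_fun continuous_bump.
  exists 1; split; first exact: num_real.
  move=> M M1 y _ /=; rewrite ger0_norm ?bump_ge0//.
  exact: le_trans (bump_le1 y) (ltW M1).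
have indic_integrable c e : mu.-integrable setT (EFin \o \1_`]c, e]%classic).
  exact: integrable_indic.
have Rint_indic c e : c <= e ->
    \int[mu]_(y in setT) \1_`]c, e]%classic y = cdfR mu e - cdfR mu c.
  move=> ce; rewrite /Rintegral integral_indic// setIT.
  exact: (congr1 fine (prob_itvoc mu c e ce) : _ = _).
apply/andP; split.
  by rewrite -Rint_indic//; apply: le_Rintegral => // y _; exact: indic_le_bump.
rewrite -Rint_indic; last by rewrite lerD// (le_trans _ (ltW d_gt0))// oppr_le0 ltW.
by apply: le_Rintegral => // y _; exact: bump_le_indic.
Qed.

End bump.

(* [k x] carries no canonical probability structure; [kprob k x] is [k x]
   equipped with one. *)
Section kernel_probability.
Context {d d'} {X : measurableType d} {Y : measurableType d'} {R : realType}.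
Variables (k : R.-pker X ~> Y) (x : X).

Definition kprob : set Y -> \bar R := k x.

HB.instance Definition _ := Measure.on kprob.
HB.instance Definition _ :=
  Measure_isProbability.Build _ _ _ kprob (@prob_kernel _ _ _ _ _ k x).

End kernel_probability.

Section stochastically_monotone_feller_semigroup.
Context {R : realType} (P : kfamily R) (t : R).
Hypotheses (P_feller : feller_semigroup P) (P_mono : stoch_monotone P) (t_ge0 : 0 <= t).
Local Notation F x := (cdfR (kprob (P t) x)).
Local Notation Pbump a b d := (Pop P t (bump a b d)).

Lemma FinvE (x u : R) : Finv P t x%:E u = quantile (kprob (P t) x) u.
Proof. by []. Qed.

Lemma Finv_nondecreasing (x : \bar R) :
  {homo Finv P t x : u v / u <= v >-> (u <= v)%E}.
Proof.
case: x => [x| |] u v uv //=; exact: (quantile_nondecreasing (kprob (P t) x)).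
Qed.

Lemma Finv_fin_num (x u : R) : 0 < u < 1 -> Finv P t x%:E u \is a fin_num.
Proof. by rewrite FinvE => /(quantile_galois (kprob (P t) x))[q [-> _]]. Qed.

Lemma Pop_indic x A : measurable A -> Pop P t \1_A x = fine (P t x A).
Proof. by move=> mA; rewrite /Pop /Rintegral integral_indic// setIT. Qed.

Lemma stoch_monotone_cdfR z {x y} : x <= y -> F y z <= F x z.
Proof.
move=> xy.
have mzy : measurable `]z, +oo[%classic by exact: measurable_itv.
have := P_mono t t_ge0 _ (measurable_indic mzy) _ _ x y xy.
rewrite !Pop_indic// -!/(kprob (P t) _ _) !prob_itvoy/= lerD2l lerN2; apply.
- by exists 1 => r; rewrite indicE; case: (_ \in _); rewrite ?normr1 ?normr0.
- move=> r s rs; rewrite !indicE.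
  case: (boolP (r \in _)) => [|_]; last by case: (_ \in _).
  rewrite !inE/= !in_itv/= !andbT => zr.
  by rewrite mem_set//= in_itv/= andbT (lt_le_trans zr).
Qed.

Lemma Finv_nondecreasing_in_x u :
  {homo (fun x => Finv P t x u) : x y / (x <= y)%E >-> (x <= y)%E}.
Proof.
move=> [x| |] [y| |] //= xy; rewrite ?leey ?leNye//.
apply: le_ereal_inf => _ [z /= yz <-]; exists z => //=.
rewrite -!/(kprob (P t) _ _) -!cdfRE !lee_fin in yz *.
by rewrite (le_trans yz)// stoch_monotone_cdfR// -lee_fin.
Qed.

Lemma Finv_law (x : \bar R) :
  measurable_fun (`[0, 1] : set R) (Finv P t x) /\
  forall B : set (\bar R), measurable B ->
    lebesgue_measure (`[0, 1]%classic `&` Finv P t x @^-1` B) = Ptilde P t x B.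
Proof.
case: x => [x| |]; split => [|B mB].
- exact: quantile_measurable (kprob (P t) x) _ (measurable_itv _).
- exact: quantile_law (kprob (P t) x) _ mB.
- exact: measurable_cst.
- exact: lebesgue_measure_itv01_setI_preimage_cst.
- exact: measurable_cst.
- exact: lebesgue_measure_itv01_setI_preimage_cst.
Qed.

Lemma Pop_bump_C0 a b {d} : 0 < d -> C0 (Pbump a b d).
Proof. by move=> d_gt0; have [_ [P_C0 _]] := P_feller; exact/P_C0/bump_C0. Qed.

Lemma Pop_bump_bounds x {a b d} : a <= b -> 0 < d ->
  F x b - F x a <= Pbump a b d x <= F x (b + d) - F x (a - d).
Proof.
by move=> ab d_gt0; have := bump_integral_bounds _ _ _ ab d_gt0 (kprob (P t) x).
Qed.

Lemma near_cdfR_increment x {a b d c} : a <= b -> 0 < d -> c < F x b - F x a ->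
  \forall y \near x, c < F y (b + d) - F y (a - d).
Proof.
move=> ab d_gt0 cF; have [Pb_cont _] := Pop_bump_C0 a b d_gt0.
have /andP[Fx_le _] := Pop_bump_bounds x ab d_gt0.
near=> y; have /andP[_ Pb_le] := Pop_bump_bounds y ab d_gt0.
rewrite (lt_le_trans _ Pb_le)//; near: y.
exact: cvgr_gt _ (Pb_cont x) _ (lt_le_trans cF Fx_le).
Unshelve. all: by end_near.
Qed.

Lemma near_pinfty_cdfR_increment {a b e} : a <= b -> 0 < e ->
  \forall y \near +oo, F y b - F y a < e.
Proof.
move=> ab e_gt0; have [_ [Pb_y0 _]] := Pop_bump_C0 a b (@ltr01 R).
near=> y; have /andP[Fy_le _] := Pop_bump_bounds y ab (@ltr01 R).
rewrite (le_lt_trans Fy_le)//; near: y.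
exact: cvgr_lt _ Pb_y0 _ e_gt0.
Unshelve. all: by end_near.
Qed.

Lemma near_ninfty_cdfR_increment {a b e} : a <= b -> 0 < e ->
  \forall y \near -oo, F y b - F y a < e.
Proof.
move=> ab e_gt0; have [_ [_ Pb_Ny0]] := Pop_bump_C0 a b (@ltr01 R).
near=> y; have /andP[Fy_le _] := Pop_bump_bounds y ab (@ltr01 R).
rewrite (le_lt_trans Fy_le)//; near: y.
exact: cvgr_lt _ Pb_Ny0 _ e_gt0.
Unshelve. all: by end_near.
Qed.

Lemma near_cdfR_lt x {z z' u} : z < z' -> F x z' < u ->
  \forall y \near x, F y z < u.
Proof.
move=> zz' Fxu; have [K z'K FK] : exists2 K, z' <= K & 1 - u + F x z' < F x K.
  by apply: exists_cdfR_gt; lra.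
have d_gt0 : 0 < z' - z by rewrite subr_gt0.
have : 1 - u < F x K - F x z' by lra.
move=> /(near_cdfR_increment x z'K d_gt0); apply: filterS => y.
rewrite opprB subrKC.
have := cdfR_le1 (kprob (P t) y) (K + (z' - z)); lra.
Qed.

Lemma near_cdfR_gt x {z z' u} : z' < z -> u < F x z' ->
  \forall y \near x, u < F y z.
Proof.
move=> z'z uFx; have [K Kz' FK] : exists2 K, K <= z' & F x K < F x z' - u.
  by apply: exists_cdfR_lt; lra.
have d_gt0 : 0 < z - z' by rewrite subr_gt0.
have : u < F x z' - F x K by lra.
move=> /(near_cdfR_increment x Kz' d_gt0); apply: filterS => y.
rewrite subrKC.
have := cdfR_ge0 (kprob (P t) y) (K - (z - z')); lra.
Qed.

Lemma near_pinfty_cdfR_lt z {u} : 0 < u -> \forall y \near +oo, F y z < u.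
Proof.
move=> u_gt0; have [v v_gt0 ->] : exists2 v, 0 < v & u = v + v.
  by exists (u / 2); rewrite ?divr_gt0 -?splitr.
have [K Kz FK] := exists_cdfR_lt (kprob (P t) z) z v_gt0.
apply: filterS2 (near_pinfty_cdfR_increment Kz v_gt0) (nbhs_pinfty_gt (num_real z)).
by move=> y Fyz /ltW zy; move: FK Fyz (stoch_monotone_cdfR K zy); lra.
Qed.

Lemma near_ninfty_cdfR_gt z {u} : u < 1 -> \forall y \near -oo, u < F y z.
Proof.
move=> u_lt1; have [v v_gt0 u1] : exists2 v, 0 < v & u + v + v = 1.
  exists ((1 - u) / 2); first by rewrite divr_gt0// subr_gt0.
  by rewrite -addrA -splitr addrC subrK.
have v_lt1 : 1 - v < 1 by rewrite gtrBl.
have [K zK FK] := exists_cdfR_gt (kprob (P t) z) z v_lt1.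
apply: filterS2 (near_ninfty_cdfR_increment zK v_gt0) (nbhs_ninfty_lt (num_real z)).
by move=> y Fyz /ltW yz; move: FK Fyz (stoch_monotone_cdfR K yz); lra.
Qed.

Lemma Finv_continuous_at_fin x u : 0 < u < 1 ->
  (forall r : rat, F x (ratr r) != u) -> {for x%:E, continuous (fun y => Finv P t y u)}.
Proof.
move=> u01 u_notin; have [q [qE qP]] := quantile_galois (kprob (P t) x) u01.
rewrite /prop_for /continuous_at FinvE qE; apply/fine_cvgP; split.
  have : \forall y \near x, Finv P t y%:E u \is a fin_num.
    by exists 1 => //= y _; exact: Finv_fin_num.
  exact.
apply/cvgrPdist_le => e e_gt0.
have Fx_lt : F x (q - e / 2) < u.
  by rewrite ltNge; apply/negP => /qP; rewrite leNgt gtrBl divr_gt0.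
have Fx_gt : u < F x (q + e / 2).
  by apply: cdfR_gt_right_quantile u01 qE u_notin _; rewrite ltrDl divr_gt0.
have e2_lt_e : e / 2 < e by rewrite ltr_pdivrMr// ltr_pMr// ltr1n.
have lt_lo : q - e < q - e / 2 by rewrite ltrD2l ltrN2.
have lt_hi : q + e / 2 < q + e by rewrite ltrD2l.
change (\forall y \near x, `|q - fine (Finv P t y%:E u)| <= e).
apply: filterS2 (near_cdfR_lt x lt_lo Fx_lt) (near_cdfR_gt x lt_hi Fx_gt).
move=> y Fy_lt Fy_gt.
have [qy [qyE qyP]] := quantile_galois (kprob (P t) y) u01.
rewrite FinvE qyE /= ler_distlC; apply/andP; split; last exact/qyP/ltW.
by rewrite leNgt; apply/negP => /ltW/qyP; rewrite leNgt Fy_lt.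
Qed.

Lemma Finv_continuous_at_pinfty u : 0 < u < 1 ->
  {for +oo%E, continuous (fun y => Finv P t y u)}.
Proof.
move=> u01; have /andP[u_gt0 _] := u01.
change ((fun y => Finv P t y u) @ nbhs +oo%E --> +oo%E).
apply/cvgeyPge => A; apply/nbhs_ereal_pinfty; split; first by rewrite leey.
apply: filterS (near_pinfty_cdfR_lt A u_gt0) => y FyA.
have [qy [qyE qyP]] := quantile_galois (kprob (P t) y) u01.
by rewrite FinvE qyE lee_fin leNgt; apply/negP => /ltW/qyP; rewrite leNgt FyA.
Qed.

Lemma Finv_continuous_at_ninfty u : 0 < u < 1 ->
  {for -oo%E, continuous (fun y => Finv P t y u)}.
Proof.
move=> u01; have /andP[_ u_lt1] := u01.
change ((fun y => Finv P t y u) @ nbhs -oo%E --> -oo%E).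
apply/cvgeNyPle => A; apply/nbhs_ereal_ninfty; split; first by rewrite leNye.
apply: filterS (near_ninfty_cdfR_gt A u_lt1) => y FyA.
have [qy [qyE qyP]] := quantile_galois (kprob (P t) y) u01.
by rewrite FinvE qyE lee_fin; apply/qyP/ltW.
Qed.

Lemma Finv_continuous_outside_countable (x : \bar R) : exists C : set R,
  countable C /\ forall u : R, u \in `[0, 1] -> ~ C u ->
    {for x, continuous (fun y : \bar R => Finv P t y u)}.
Proof.
exists ([set 0; 1] `|` range (fun r : rat => F (fine x) (ratr r))); split.
  apply: countableU; first by apply: countableU; exact: countable1.
  exact: sub_countable (card_image_le _ _) (countableP _).
move=> u; rewrite in_itv/= => /andP[u_ge0 u_le1] uC.
have u01 : 0 < u < 1.
  by rewrite !lt_neqAle u_ge0 u_le1 !andbT; apply/andP; split; apply/eqP => u01;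
    apply: uC; left; [left|right].
case: x uC => [x| |] uC.
- apply: Finv_continuous_at_fin => // r; apply/eqP => Fxr.
  by apply: uC; right; exists r.
- exact: Finv_continuous_at_pinfty.
- exact: Finv_continuous_at_ninfty.
Qed.

End stochastically_monotone_feller_semigroup.

Theorem lemma3p1 (R : realType) (P : kfamily R) :
  feller_semigroup P -> stoch_monotone P ->
  (* (a) *)
  (forall (x : \bar R) (t : R), 0 <= t ->
     {in `[0, 1] &, {homo Finv P t x : u v / u <= v >-> (u <= v)%E}}) /\
  (* (b) *)
  (forall (x t u : R), 0 <= t -> 0 < u < 1 -> Finv P t x%:E u \is a fin_num) /\
  (* (c) *)
  (forall (t u : R), 0 <= t -> 0 < u < 1 ->
     {homo (fun x => Finv P t x u) : x y / (x <= y)%E >-> (x <= y)%E}) /\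
  (* (d) law of F^{[-1]}_{x,t}(U), U uniform on [0,1] *)
  (forall (x : \bar R) (t : R), 0 <= t ->
     measurable_fun (`[0, 1] : set R) (Finv P t x) /\
     forall B : set (\bar R), measurable B ->
       (@lebesgue_measure R) ((`[0, 1] : set R) `&` (Finv P t x) @^-1` B) = Ptilde P t x B) /\
  (* (e) *)
  (forall (t : R) (x : \bar R), 0 <= t ->
     exists C : set R, countable C /\
       forall u : R, u \in `[0, 1] -> ~ C u ->
         {for x, continuous (fun y : \bar R => Finv P t y u)}).
Proof.
move=> P_feller P_mono; split; first by move=> x t _ u v _ _; exact: Finv_nondecreasing.
split; first by move=> x t u _; exact: Finv_fin_num.
split; first by move=> t u t_ge0 _; exact: Finv_nondecreasing_in_x.
split; first by move=> x t _; exact: Finv_law.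
by move=> t x t_ge0; exact: Finv_continuous_outside_countable.
Qed.
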